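(* Let $\gamma(X,R)$ be a time-series constraint of the family $\mathrm{nb}\_\sigma$ or $\mathrm{sum\_width}\_\sigma$ that satisfies the gap-to-loss, boundedness and disjointedness conditions, and let $\delta\in\mathbb{N}$. Then for every ground time series $X$, $\mathrm{Gap}_\gamma(X)=\delta$ if and only if $\mathrm{Loss}_\gamma(X)$ belongs to the loss interval $L(\delta,\mathrm{sgn}(R))$, where $R$ is the value yielded by $X$.
   Context: Signature of $X=\langle X_1,\dots,X_n\rangle$: the word $\langle S_1,\dots,S_{n-1}\rangle$ over $\{<,=,>\}$ with $S_i$ given by comparing $X_i$ and $X_{i+1}$. For a regular expression $\sigma$ over $\{<,=,>\}$ with integer constants $b_\sigma,a_\sigma$, whenever $\langle S_i,\dots,S_j\rangle$ is a maximal word matching $\sigma$, $\langle X_{i+b_\sigma},\dots,X_{j+1-a_\sigma}\rangle$ is a $\sigma$-pattern; $\mathrm{nb}\_\sigma(X,R)$: $R$ is the number of $\sigma$-patterns; $\mathrm{sum\_width}\_\sigma(X,R)$: $R$ is the total number of elements of all $\sigma$-patterns (0 if none). A ground time series is a fixed non-empty integer sequence. Gap: $\mathrm{Gap}_\gamma(X)$ is the maximum value of $R$ over all time series of length $n$ minus the value of $R$ yielded by $X$. Loss: $\mathrm{Loss}_\gamma(X)$ is $n$ minus the length of a shortest time series yielding the same value of $R$ as $X$. $\mathrm{sgn}$ is the signum function. Gap-to-loss condition: there is a function $h$ with $\mathrm{Loss}_\gamma(X)=h(\mathrm{Gap}_\gamma(X),\mathrm{sgn}(R),n)$ for every ground time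 series $X$ of length $n$. Boundedness condition: for every $\delta\in\mathbb{N}$ and $s\in\{0,1\}$ there is a bounded integer interval $L(\delta,s)$, called the loss interval w.r.t. $\langle\delta,s\rangle$, containing $h(\delta,s,n)$ for every $n\in\mathbb{N}$. Disjointedness condition: for each $s\in\{0,1\}$ and $\delta_1\neq\delta_2$, $L(\delta_1,s)\cap L(\delta_2,s)=\emptyset$. *)

From mathcomp Require Import all_boot all_order all_algebra.
From Stdlib Require Import ClassicalEpsilon.
Set Implicit Arguments. Unset Strict Implicit. Unset Printing Implicit Defensive.
Import Order.TTheory GRing.Theory Num.Theory.

Inductive sym := SLt | SEq | SGt.

Inductive regex :=
| RVoid | REps | RChr of sym
| RCat of regex & regex | RAlt of regex & regex | RStar of regex.

Inductive rmatch : regex -> seq sym -> Prop :=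
| MEps : rmatch REps [::]
| MChr c : rmatch (RChr c) [:: c]
| MAltL r1 r2 w : rmatch r1 w -> rmatch (RAlt r1 r2) w
| MAltR r1 r2 w : rmatch r2 w -> rmatch (RAlt r1 r2) w
| MCat r1 r2 w1 w2 : rmatch r1 w1 -> rmatch r2 w2 -> rmatch (RCat r1 r2) (w1 ++ w2)
| MStar0 r : rmatch (RStar r) [::]
| MStarS r w1 w2 : rmatch r w1 -> rmatch (RStar r) w2 -> rmatch (RStar r) (w1 ++ w2).

Definition pbool (P : Prop) : bool :=
  if excluded_middle_informative P then true else false.

Definition cmpz (x y : int) : sym :=
  if (x < y)%R then SLt else if x == y then SEq else SGt.

Definition signature (X : seq int) : seq sym :=
  [seq cmpz p.1 p.2 | p <- zip X (behead X)].

(* The factor <S_i, ..., S_j> (0-based indices). *)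
Definition factor (S : seq sym) (i j : nat) : seq sym := take (j - i).+1 (drop i S).

Definition maxocc (sigma : regex) (S : seq sym) (p : nat * nat) : Prop :=
  let: (i, j) := p in
  [/\ i <= j, j < size S, rmatch sigma (factor S i j) &
      forall i' j', i' <= i -> j <= j' -> j' < size S ->
        rmatch sigma (factor S i' j') -> i' = i /\ j' = j].

Definition occs (sigma : regex) (S : seq sym) : seq (nat * nat) :=
  [seq p <- [seq (i, j) | i <- iota 0 (size S), j <- iota 0 (size S)]
     | pbool (maxocc sigma S p)].

(* Number of elements of the sigma-pattern <X_{i+b}, ..., X_{j+1-a}>. *)
Definition pwidth (b a : int) (p : nat * nat) : nat :=
  let w := ((p.2%:Z + 1 - a) - (p.1%:Z + b) + 1)%R in
  if (w <= 0)%R then 0 else absz w.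

Inductive ts_family := Nb | SumWidth.

Definition gamma (fam : ts_family) (sigma : regex) (b a : int) (X : seq int) : nat :=
  match fam with
  | Nb => size (occs sigma (signature X))
  | SumWidth => sumn [seq pwidth b a p | p <- occs sigma (signature X)]
  end.

Definition IsGap (gam : seq int -> nat) (X : seq int) (g : nat) : Prop :=
  exists M : nat,
    [/\ exists Y, size Y = size X /\ gam Y = M,
        forall Y, size Y = size X -> gam Y <= M &
        g = M - gam X].

Definition IsLoss (gam : seq int -> nat) (X : seq int) (l : nat) : Prop :=
  exists m : nat,
    [/\ exists Y, [/\ size Y = m, 0 < m & gam Y = gam X],
        forall Y, 0 < size Y -> gam Y = gam X -> m <= size Y &
        l = size X - m].

Definition sgn (r : nat) : nat := if r == 0 then 0 else 1.

(* Both Gap and Loss are well defined for every non-empty ground series: a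
   shortest series with the same value exists by well-ordering, and the value
   is bounded on each length class because the maximal occurrences of σ in a
   signature of length n are among its n^2 index pairs.  Gap_γ(X) = δ then puts
   Loss_γ(X) = h(δ, sgn R, |X|) in L(δ, sgn R) by boundedness; conversely, if
   Loss_γ(X) ∈ L(δ, sgn R), it also lies in L(Gap_γ(X), sgn R), so disjointedness
   forces Gap_γ(X) = δ. *)
From mathcomp Require Import all_boot all_order all_algebra.
From Stdlib Require Import ClassicalEpsilon.
Import Order.TTheory GRing.Theory Num.Theory.

Set Implicit Arguments.
Unset Strict Implicit.
Unset Printing Implicit Defensive.

Lemma pboolP (P : Prop) : reflect P (pbool P).
Proof. by rewrite /pbool; case: excluded_middle_informative => HP; constructor. Qed.

Lemma classic_ex_minn (P : nat -> Prop) :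
  (exists n, P n) -> exists m, P m /\ forall n, P n -> m <= n.
Proof.
move=> [n Pn]; have exP : exists n, pbool (P n) by exists n; apply/pboolP.
case: (ex_minnP exP) => m /pboolP Pm m_min.
by exists m; split=> // k /pboolP; apply: m_min.
Qed.

Lemma classic_ex_maxn (P : nat -> Prop) (B : nat) :
  (exists n, P n) -> (forall n, P n -> n <= B) ->
  exists m, P m /\ forall n, P n -> n <= m.
Proof.
move=> [n Pn] le_B; have exP : exists n, pbool (P n) by exists n; apply/pboolP.
have boundP : forall n, pbool (P n) -> n <= B by move=> k /pboolP; apply: le_B.
case: (ex_maxnP exP boundP) => m /pboolP Pm m_max.
by exists m; split=> // k /pboolP; apply: m_max.
Qed.

Lemma exists_IsLoss (gam : seq int -> nat) (X : seq int) :
  0 < size X -> exists l, IsLoss gam X l.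
Proof.
move=> X_gt0.
have [m [[Y [sizeY m_gt0 gamY]] m_min]] :=
  @classic_ex_minn (fun m => exists Y, [/\ size Y = m, 0 < m & gam Y = gam X])
    (ex_intro _ (size X) (ex_intro _ X (And3 erefl X_gt0 erefl))).
exists (size X - m), m; split=> //; first by exists Y.
by move=> Z Z_gt0 gamZ; apply: m_min; exists Z.
Qed.

Lemma exists_IsGap (gam : seq int -> nat) (B : nat -> nat) (X : seq int) :
  (forall Y, gam Y <= B (size Y)) -> exists g, IsGap gam X g.
Proof.
move=> gam_le.
have bounded : forall m, (exists Y, size Y = size X /\ gam Y = m) -> m <= B (size X).
  by move=> m [Y [<- <-]].
have [M [[Y [sizeY gamY]] M_max]] :=
  classic_ex_maxn (ex_intro _ (gam X) (ex_intro _ X (conj erefl erefl))) bounded.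
exists (M - gam X), M; split=> //; first by exists Y.
by move=> Z sizeZ; apply: M_max; exists Z.
Qed.

Lemma size_signature (X : seq int) : size (signature X) = (size X).-1.
Proof. rewrite size_map size_zip size_behead; case: (size X) => //= n; exact/minn_idPr/leqnSn. Qed.

Definition index_pairs (k : nat) : seq (nat * nat) :=
  [seq (i, j) | i <- iota 0 k, j <- iota 0 k].

Definition gamma_bound (fam : ts_family) (b a : int) (n : nat) : nat :=
  match fam with
  | Nb => size (index_pairs n.-1)
  | SumWidth => sumn [seq pwidth b a p | p <- index_pairs n.-1]
  end.

Lemma sumn_map_filter_le (T : Type) (P : pred T) (f : T -> nat) (s : seq T) :
  sumn [seq f x | x <- s & P x] <= sumn [seq f x | x <- s].
Proof.
elim: s => //= x s IHs; case: (P x) => /=; first by rewrite leq_add2l.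
exact: leq_trans IHs (leq_addl _ _).
Qed.

Lemma gamma_le_bound (fam : ts_family) (sg : regex) (b a : int) (Y : seq int) :
  gamma fam sg b a Y <= gamma_bound fam b a (size Y).
Proof.
rewrite /gamma /gamma_bound /occs -size_signature -/(index_pairs _).
case: fam; last exact: sumn_map_filter_le.
by rewrite size_filter count_size.
Qed.

Theorem lemma1 (fam : ts_family) (sg : regex) (b a : int)
  (h : nat -> nat -> nat -> nat) (Llo Lhi : nat -> nat -> int)
  (gap_to_loss : forall X : seq int, 0 < size X -> forall g l : nat,
      IsGap (gamma fam sg b a) X g -> IsLoss (gamma fam sg b a) X l ->
      l = h g (sgn (gamma fam sg b a X)) (size X))
  (boundedness : forall (d s : nat), s <= 1 -> forall n : nat,
      (Llo d s <= (h d s n)%:Z <= Lhi d s)%R)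
  (disjointedness : forall (s : nat), s <= 1 -> forall d1 d2 : nat, d1 <> d2 ->
      forall z : int, ~ ((Llo d1 s <= z <= Lhi d1 s)%R /\ (Llo d2 s <= z <= Lhi d2 s)%R))
  (d : nat) (X : seq int) (HX : 0 < size X) :
  IsGap (gamma fam sg b a) X d <->
  exists l : nat, IsLoss (gamma fam sg b a) X l /\
    (Llo d (sgn (gamma fam sg b a X)) <= l%:Z <= Lhi d (sgn (gamma fam sg b a X)))%R.
Proof.
set gam := gamma fam sg b a.
have sgn_le1 : sgn (gam X) <= 1 by rewrite /sgn; case: (_ == 0).
split=> [gapX | [l' [lossX' l'_in]]].
  have [l lossX] := exists_IsLoss gam HX.
  by exists l; split=> //; rewrite (gap_to_loss X HX d l gapX lossX); apply: boundedness.
have [g gapX] := exists_IsGap X (gamma_le_bound fam sg b a).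
have l'_eq := gap_to_loss X HX g l' gapX lossX'.
have [-> | d_neq_g] := eqVneq d g; first exact: gapX.
exfalso; apply: (disjointedness _ sgn_le1 d g (elimN eqP d_neq_g) l'); split=> //.
by rewrite l'_eq; apply: boundedness.
Qed.
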